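(* Let $q$ be a prime power, let $\mathbf{C}\subseteq\mathbf{F}_q^n$ be a projective linear $[n,k]_q$ code with maximum weight $w\le n$, and let $h$ be a positive integer. Then the simplex complementary code of $\mathbf{C}$ of dimension $k+h$ has parameters $[\frac{q^{k+h}-1}{q-1}-n,\ k+h,\ q^{k+h-1}-w]_q$ and maximum weight $q^{k+h-1}$. When $h>\log_q w-k+2$, this simplex complementary code is a minimal code satisfying the Ashikhmin–Barg condition.
   Context: A linear $[n,k]_q$ code is projective if the columns $\mathbf{g}_1,\dots,\mathbf{g}_n$ of a generator matrix are nonzero and pairwise linearly independent. Simplex complementary code: set $K=k+h$ and regard $\mathbf{g}_1,\dots,\mathbf{g}_n$ as vectors of $\mathbf{F}_q^K$ by appending $h$ zero coordinates. Choose a set $P$ of representatives of all $\frac{q^K-1}{q-1}$ one-dimensional subspaces of $\mathbf{F}_q^K$ containing $\mathbf{g}_1,\dots,\mathbf{g}_n$. The simplex complementary code of $\mathbf{C}$ is the linear code generated by the $K\times(\frac{q^K-1}{q-1}-n)$ matrix whose columns are the elements of $P\setminus\{\mathbf{g}_1,\dots,\mathbf{g}_n\}$. A linear code is minimal if for all nonzero codewords $\mathbf{c},\mathbf{c}'$ with $supp(\mathbf{c}')\subseteq supp(\mathbf{c})$ there is $\lambda\in\mathbf{F}_q^*$ with $\mathbf{c}'=\lambda\mathbf{c}$. With $w_{min},w_{max}$ the minimum and maximum weights of nonzero codewords, the Ashikhmin–Barg condition is $w_{min}/w_{max}>(q-1)/q$. The notation $[n,k,d]_q$ means length $n$, dimension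 $k$, minimum distance $d$. *)

From Stdlib Require Import Rdefinitions Raxioms Rpower.
From HB Require Import structures.
From mathcomp Require Import all_boot all_order all_algebra all_field.
From mathcomp Require Import Rstruct.
Set Implicit Arguments. Unset Strict Implicit. Unset Printing Implicit Defensive.
Import Order.TTheory GRing.Theory Num.Theory.
Local Open Scope ring_scope.

Section Codes.
Variable F : finFieldType.

Definition supp n (c : 'rV[F]_n) : {set 'I_n} := [set j | c 0 j != 0].
Definition wt n (c : 'rV[F]_n) : nat := #|supp c|.

Definition codeword k n (M : 'M[F]_(k, n)) (c : 'rV[F]_n) : Prop :=
  exists x : 'rV[F]_k, c = x *m M.

Definition lin_indep2 K (u v : 'cV[F]_K) : Prop :=
  forall a b : F, a *: u + b *: v = 0 -> a = 0 /\ b = 0.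

Definition projective k n (M : 'M[F]_(k, n)) : Prop :=
  (forall j, col j M != 0) /\
  (forall i j, i != j -> lin_indep2 (col i M) (col j M)).

(* the columns of T form a set of representatives of all one-dimensional
   subspaces of F^K (each subspace represented exactly once) *)
Definition rep_system K N (T : 'M[F]_(K, N)) : Prop :=
  projective T /\
  (forall v : 'cV[F]_K, v != 0 -> exists j a, v = a *: col j T).

Definition is_minwt k n (M : 'M[F]_(k, n)) (d : nat) : Prop :=
  (exists c, codeword M c /\ c != 0 /\ wt c = d) /\
  (forall c, codeword M c -> c != 0 -> (d <= wt c)%N).
Definition is_maxwt k n (M : 'M[F]_(k, n)) (d : nat) : Prop :=
  (exists c, codeword M c /\ c != 0 /\ wt c = d) /\
  (forall c, codeword M c -> c != 0 -> (wt c <= d)%N).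

Definition minimal_code k n (M : 'M[F]_(k, n)) : Prop :=
  forall c c', codeword M c -> codeword M c' -> c != 0 -> c' != 0 ->
    supp c' \subset supp c -> exists2 l : F, l != 0 & c' = l *: c.

Definition ashikhmin_barg k n (M : 'M[F]_(k, n)) : Prop :=
  forall dmin dmax, is_minwt M dmin -> is_maxwt M dmax ->
    ((#|F|.-1)%:R / (#|F|)%:R < dmin%:R / dmax%:R :> rat).

End Codes.

Definition logR (b x : nat) : R := Rdiv (ln (INR x)) (ln (INR b)).

(* The columns of [row_mx (col_mx G 0) S] represent each point of the projective
   space PG(K-1, q), K = k + h, exactly once.  A nonzero x : 'rV_K vanishes on a
   hyperplane of q^(K-1) vectors, so it is nonzero on q^K - q^(K-1) vectors, i.e.
   on q^(K-1) representatives: the simplex code has constant weight q^(K-1).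
   Splitting x = (y, z) gives wt (x S) = q^(K-1) - wt (y G), so the weights of the
   complementary code range over [q^(K-1) - w, q^(K-1)], both ends attained; as
   q^(K-1) > n, no nonzero x annihilates S.  If log_q w < K - 2, i.e. q w < q^(K-1),
   the weight ratio exceeds (q-1)/q, and minimality follows from the
   Ashikhmin-Barg count: if supp c' is contained in supp c, then the weights of
   c' - l c summed over all l in F give (q-1) wt c. *)

From Stdlib Require Import Reals.
From Stdlib Require Import Rdefinitions Raxioms Rpower.
From HB Require Import structures.
From mathcomp Require Import all_boot all_order all_algebra all_field.
From mathcomp Require Import Rstruct.
From mathcomp Require Import zify ring lra.
Set Implicit Arguments. Unset Strict Implicit. Unset Printing Implicit Defensive.
Import Order.TTheory GRing.Theory Num.Theory.
Local Open Scope ring_scope.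

Section Weight.
Variable F : finFieldType.

Lemma wtE n (c : 'rV[F]_n) : wt c = \sum_(j < n) (c 0 j != 0 : nat).
Proof. by rewrite /wt /supp -sum1_card big_mkcond; apply: eq_bigr => j _; rewrite inE. Qed.

Lemma wt_row_mx n1 n2 (a : 'rV[F]_n1) (b : 'rV[F]_n2) :
  wt (row_mx a b) = (wt a + wt b)%N.
Proof.
by rewrite !wtE big_split_ord; congr (_ + _)%N; apply: eq_bigr => j _;
  rewrite (row_mxEl, row_mxEr).
Qed.

Lemma wt_le n (c : 'rV[F]_n) : (wt c <= n)%N.
Proof. by rewrite -[n in (_ <= n)%N]card_ord max_card. Qed.

Lemma wt_eq0 n (c : 'rV[F]_n) : (wt c == 0)%N = (c == 0).
Proof.
rewrite /wt cards_eq0; apply/eqP/eqP => [supp0 | ->]; last first.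
  by apply/setP => j; rewrite !inE mxE eqxx.
apply/rowP => j; rewrite mxE; apply/eqP; apply: contraFT (in_set0 j) => cj.
by rewrite -supp0 inE.
Qed.

Lemma wt0 n : wt (0 : 'rV[F]_n) = 0%N.
Proof. by apply/eqP; rewrite wt_eq0. Qed.

End Weight.

Section Projective.
Variable F : finFieldType.

Lemma card_rep_system_pred K N (A : 'M[F]_(K, N)) (g : pred 'cV[F]_K) :
  rep_system A -> ~~ g 0 -> (forall a v, a != 0 -> g (a *: v) = g v) ->
  #|[set v | g v]| = (#|[set j | g (col j A)]| * #|F|.-1)%N.
Proof.
move=> [[col_nz col_indep] col_span] g0 gZ.
pose scale_col (p : 'I_N * F) := p.2 *: col p.1 A.
have -> : #|F|.-1 = #|[set a : F | a != 0]|.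
  by rewrite -(cardsC1 (0 : F)); apply: eq_card => a; rewrite !inE.
rewrite -cardsX -(card_in_imset (f := scale_col)).
  apply: eq_card => v; rewrite inE; apply/idP/imsetP => [gv | [[j a]]].
    have v_nz : v != 0 by apply: contraNneq g0 => <-.
    have [j [a def_v]] := col_span v v_nz.
    have a_nz : a != 0 by apply: contraNneq v_nz => a0; rewrite def_v a0 scale0r.
    by exists (j, a); rewrite // !inE /= a_nz andbT -(gZ a) // -def_v.
  by rewrite !inE /= => /andP[gj a_nz] ->; rewrite /scale_col gZ.
move=> [j a] [j' b]; rewrite !inE /= => /andP[_ a_nz] /andP[_ b_nz].
rewrite /scale_col /= => eq_ab.
have jj' : j = j'.
  apply: contraNeq a_nz => /col_indep /(_ a (- b)) [|-> //].
  by rewrite scaleNr eq_ab subrr.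
subst j'; congr (_, _); apply/eqP; rewrite -subr_eq0.
have : (a - b) *: col j A == 0 by rewrite scalerBl eq_ab subrr.
by rewrite scaler_eq0 (negbTE (col_nz j)) orbF.
Qed.

Lemma card_rep_system K N (A : 'M[F]_(K, N)) :
  rep_system A -> (N * #|F|.-1)%N = (#|F| ^ K).-1.
Proof.
move=> repA.
have nzZ (a : F) (v : 'cV[F]_K) : a != 0 -> (a *: v != 0) = (v != 0).
  by move=> a_nz; rewrite scaler_eq0 negb_or a_nz.
have := card_rep_system_pred (g := predC1 0) repA; rewrite /= eqxx.
move=> /(_ isT nzZ) card_nz.
have -> : N = #|[set j | predC1 0 (col j A)]|.
  by rewrite -[LHS]card_ord; apply: eq_card => j; rewrite inE /= repA.1.1.
rewrite -card_nz -[K in RHS]muln1 -card_mx -(cardsC1 0).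
by apply: eq_card => v; rewrite !inE.
Qed.

Definition hyperplane K (x : 'rV[F]_K) : {set 'cV[F]_K} :=
  [set v | (x *m v) 0 0 == 0].

Lemma card_hyperplane K (x : 'rV[F]_K) : x != 0 ->
  (#|hyperplane x| * #|F|)%N = (#|F| ^ K)%N.
Proof.
move=> x_nz; pose f (v : 'cV[F]_K) := (x *m v) 0 0.
have fD u v : f (u + v) = f u + f v by rewrite /f mulmxDr mxE.
have fZ a v : f (a *: v) = a * f v by rewrite /f -scalemxAr mxE.
have [v0 fv0] : exists v0, f v0 = 1.
  have /existsP[i xi] : [exists i, x 0 i != 0].
    apply: contraNT x_nz; rewrite negb_exists => /forallP x0.
    by apply/eqP/rowP => i; rewrite mxE; apply/eqP/negbNE/x0.
  by exists ((x 0 i)^-1 *: delta_mx i 0); rewrite fZ /f -colE mxE mulVf.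
have -> : (#|F| ^ K = #|[set: 'cV[F]_K]|)%N by rewrite cardsT card_mx muln1.
rewrite -[#|F|]cardsT -cardsX.
rewrite -(card_in_imset (f := fun p : 'cV[F]_K * F => p.1 + p.2 *: v0)).
  apply: eq_card => u; rewrite inE; apply/imsetP.
  exists (u - f u *: v0, f u); last by rewrite /= subrK.
  by rewrite !inE andbT; apply/eqP; rewrite -[LHS]/(f _) fD -scaleNr fZ fv0 mulr1 subrr.
move=> [u a] [u' b]; rewrite !inE -!/(f _) /=.
move=> /andP[/eqP fu _] /andP[/eqP fu' _] eq_ab.
have ab : a = b by have := congr1 f eq_ab; rewrite !fD !fZ fu fu' fv0 !add0r !mulr1.
by subst b; congr (_, _); apply: addIr eq_ab.
Qed.

Lemma wt_rep_system K N (A : 'M[F]_(K, N)) (x : 'rV[F]_K) :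
  rep_system A -> x != 0 -> wt (x *m A) = (#|F| ^ K.-1)%N.
Proof.
move=> repA x_nz; set H := hyperplane x.
have K_gt0 : (0 < K)%N by case: K x x_nz {A repA H} => // x; rewrite (thinmx0 x) eqxx.
have q_gt0 : (0 < #|F|)%N by apply/card_gt0P; exists 0.
have r_gt0 : (0 < #|F|.-1)%N by rewrite -ltnS prednK // card_finNzRing_gt1.
have wt_xA : wt (x *m A) = #|[set j | col j A \notin H]|.
  apply: eq_card => j; rewrite !inE !mxE; congr (~~ (_ == 0)).
  by apply: eq_bigr => i _; rewrite mxE.
have HZ a v : a != 0 -> (a *: v \notin H) = (v \notin H).
  by move=> a_nz; rewrite /H !inE -scalemxAr mxE mulf_eq0 negb_or a_nz.
have := card_rep_system_pred (g := fun v => v \notin H) repA.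
rewrite /H !inE mulmx0 mxE eqxx -wt_xA => /(_ isT HZ) card_compl.
have card_H : #|H| = (#|F| ^ K.-1)%N.
  by apply/eqP; rewrite -(eqn_pmul2r q_gt0) card_hyperplane // mulnC -expnS prednK.
have card_split : (#|H| + #|[set v | v \notin H]| = #|F| ^ K)%N.
  rewrite -[K in RHS]muln1 -card_mx -(cardsC H).
  by congr (_ + _)%N; apply: eq_card => v; rewrite !inE.
move: card_split; rewrite card_H card_compl -[in RHS](prednK K_gt0) expnS.
rewrite -[X in _ = (X * _)%N -> _](prednK q_gt0) mulSn => /addnI split_eq.
by apply/eqP; rewrite -(eqn_pmul2r r_gt0) split_eq mulnC.
Qed.

End Projective.

Section WeightRatio.
Variable F : finFieldType.

Lemma is_minwt_uniq k n (M : 'M[F]_(k, n)) d1 d2 :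
  is_minwt M d1 -> is_minwt M d2 -> d1 = d2.
Proof.
move=> [[c1 [Mc1 [c1_nz <-]]] min1] [[c2 [Mc2 [c2_nz <-]]] min2].
by apply/eqP; rewrite eqn_leq min1 ?min2.
Qed.

Lemma is_maxwt_uniq k n (M : 'M[F]_(k, n)) d1 d2 :
  is_maxwt M d1 -> is_maxwt M d2 -> d1 = d2.
Proof.
move=> [[c1 [Mc1 [c1_nz <-]]] max1] [[c2 [Mc2 [c2_nz <-]]] max2].
by apply/eqP; rewrite eqn_leq max1 ?max2.
Qed.

Lemma is_maxwt_gt0 k n (M : 'M[F]_(k, n)) d : is_maxwt M d -> (0 < d)%N.
Proof. by move=> [[c [_ [c_nz <-]]] _]; rewrite lt0n wt_eq0. Qed.

Lemma card_sub_scale_neq0 (a b : F) : b != 0 ->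
  #|[pred l : F | a - l * b != 0]| = #|F|.-1.
Proof.
move=> b_nz; rewrite -(cardC1 (a / b)); apply: eq_card => l.
rewrite !inE subr_eq0; congr negb.
by apply/eqP/eqP => [-> | ->]; rewrite ?mulfK ?divfK.
Qed.

Lemma sum_wt_sub_scale n (c c' : 'rV[F]_n) : supp c' \subset supp c ->
  (\sum_(l : F) wt (c' - l *: c)%R = #|F|.-1 * wt c)%N.
Proof.
move=> sub_cc'; under eq_bigr do rewrite wtE.
rewrite exchange_big wtE big_distrr; apply: eq_bigr => j _ /=.
have [cj0 | cj_nz] := eqVneq (c 0 j) 0.
  have c'j0 : c' 0 j = 0.
    apply/eqP; apply: contraLR isT => c'j.
    by have := subsetP sub_cc' j; rewrite !inE c'j cj0 eqxx => /(_ isT).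
  by rewrite muln0 big1 // => l _; rewrite !mxE cj0 c'j0 mulr0 subrr eqxx.
rewrite muln1 -(card_sub_scale_neq0 (c' 0 j) cj_nz) -sum1_card [RHS]big_mkcond /=.
by apply: eq_bigr => l _; rewrite !mxE inE; case: ifP.
Qed.

Lemma minimal_code_of_weights k n (M : 'M[F]_(k, n)) dmin dmax :
  is_minwt M dmin -> is_maxwt M dmax -> (#|F|.-1 * dmax < #|F| * dmin)%N ->
  minimal_code M.
Proof.
move=> [_ minM] [_ maxM] ratio _ _ [x ->] [x' ->] c_nz c'_nz sub_cc'.
have [l /eqP def_c' | no_multiple] := pickP [pred l : F | x' *m M == l *: (x *m M)].
  by exists l => //; apply: contraNneq c'_nz => l0; rewrite def_c' l0 scale0r.
suff : (#|F| * dmin <= #|F|.-1 * dmax)%N by rewrite leqNgt ratio.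
have Mc : codeword M (x *m M) by exists x.
apply: leq_trans (leq_mul (leqnn _) (maxM _ Mc c_nz)).
rewrite -(sum_wt_sub_scale sub_cc') -sum_nat_const; apply: leq_sum => l _; apply: minM.
  by exists (x' - l *: x); rewrite mulmxBl scalemxAl.
by rewrite subr_eq0; apply/negbT/no_multiple.
Qed.

Lemma ashikhmin_barg_of_weights k n (M : 'M[F]_(k, n)) dmin dmax :
  is_minwt M dmin -> is_maxwt M dmax -> (#|F|.-1 * dmax < #|F| * dmin)%N ->
  ashikhmin_barg M.
Proof.
move=> minM maxM ratio d d' /(is_minwt_uniq minM) <- /(is_maxwt_uniq maxM) <-.
have dmax_gt0 := is_maxwt_gt0 maxM.
have q_gt0 : (0 < #|F|)%N by apply/card_gt0P; exists 0.
rewrite ltr_pdivlMr ?ltr0n // mulrAC ltr_pdivrMr ?ltr0n // -!natrM ltr_nat.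
by rewrite [X in (_ < X)%N]mulnC.
Qed.

End WeightRatio.

Section SimplexComplement.
Variables (F : finFieldType) (n k h m : nat).
Variables (G : 'M[F]_(k, n)) (S : 'M[F]_(k + h, m)).
Hypothesis repGS : rep_system (row_mx (col_mx G 0) S).

Lemma wt_complement (x : 'rV[F]_(k + h)) : x != 0 ->
  (wt (lsubmx x *m G) + wt (x *m S))%N = (#|F| ^ (k + h - 1))%N.
Proof.
move=> x_nz; rewrite subn1 -(wt_rep_system repGS x_nz) mul_mx_row wt_row_mx.
by rewrite -[x in x *m col_mx _ _]hsubmxK mul_row_col mulmx0 addr0.
Qed.

Lemma complement_length : m = ((#|F| ^ (k + h) - 1) %/ (#|F| - 1) - n)%N.
Proof.
have r_gt0 : (0 < #|F|.-1)%N by rewrite -subn1 subn_gt0 card_finNzRing_gt1.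
by rewrite !subn1 -(card_rep_system repGS) mulnK // addKn.
Qed.

Hypothesis h_gt0 : (0 < h)%N.

Lemma complement_wt_attained :
  exists2 x : 'rV[F]_(k + h), x != 0 & wt (x *m S) = (#|F| ^ (k + h - 1))%N.
Proof.
pose x := row_mx (0 : 'rV[F]_k) (delta_mx 0 (Ordinal h_gt0)).
have x_nz : x != 0.
  apply: contraTneq isT => /rowP /(_ (rshift k (Ordinal h_gt0))).
  by rewrite row_mxEr !mxE !eqxx => /eqP; rewrite oner_eq0.
by exists x => //; rewrite -(wt_complement x_nz) row_mxKl mul0mx wt0.
Qed.

Lemma complement_maxwt : is_maxwt S (#|F| ^ (k + h - 1)).
Proof.
have P_gt0 : (0 < #|F| ^ (k + h - 1))%N by rewrite expn_gt0 ltnW ?card_finNzRing_gt1.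
split=> [|_ [x ->] xS_nz].
  have [x x_nz wt_xS] := complement_wt_attained.
  exists (x *m S); split; first by exists x.
  by rewrite -wt_eq0 wt_xS -lt0n.
have x_nz : x != 0 by apply: contraNneq xS_nz => ->; rewrite mul0mx.
by rewrite -(wt_complement x_nz) leq_addl.
Qed.

Lemma size_lt_complement_maxwt : (n < #|F| ^ (k + h - 1))%N.
Proof.
have q_gt1 := card_finNzRing_gt1 F.
have [x _ wt_xS] := complement_wt_attained.
have P_le_m : (#|F| ^ (k + h - 1) <= m)%N by rewrite -wt_xS wt_le.
have expP : (#|F| ^ (k + h) = #|F| * #|F| ^ (k + h - 1))%N.
  by rewrite -expnS subn1 prednK // addn_gt0 h_gt0 orbT.
have := card_rep_system repGS; rewrite expP.
move: P_le_m q_gt1; set P := (#|F| ^ (k + h - 1))%N; set q := #|F|.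
nia.
Qed.

Lemma rank_complement : \rank S = (k + h)%N.
Proof.
apply/eqP; apply: inj_row_free => x xS0; apply/eqP; apply: contraT => x_nz.
have := wt_complement x_nz; rewrite xS0 wt0 addn0 => wt_xG.
by have := wt_le (lsubmx x *m G); rewrite wt_xG leqNgt size_lt_complement_maxwt.
Qed.

Lemma complement_minwt w : is_maxwt G w -> is_minwt S (#|F| ^ (k + h - 1) - w).
Proof.
move=> [[_ [[y ->] [yG_nz wt_yG]]] maxG].
have w_lt_P : (w < #|F| ^ (k + h - 1))%N.
  by apply: leq_ltn_trans size_lt_complement_maxwt; rewrite -wt_yG wt_le.
split=> [|_ [x ->] xS_nz].
  pose x := row_mx y (0 : 'rV[F]_h).
  have x_nz : x != 0.
    by apply: contraNneq yG_nz; rewrite -row_mx0 => /eq_row_mx[-> _]; rewrite mul0mx.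
  have := wt_complement x_nz; rewrite row_mxKl wt_yG => wt_xS.
  exists (x *m S); split; first by exists x.
  by split; [rewrite -wt_eq0; lia | lia].
have x_nz : x != 0 by apply: contraNneq xS_nz => ->; rewrite mul0mx.
have wt_xG : (wt (lsubmx x *m G) <= w)%N.
  have [->|xG_nz] := eqVneq (lsubmx x *m G) 0; first by rewrite wt0.
  by apply: maxG => //; exists (lsubmx x).
have := wt_complement x_nz; lia.
Qed.

End SimplexComplement.

Lemma ln_nat_gt0 (q : nat) : (1 < q)%N -> Rlt 0 (ln (INR q)).
Proof.
move=> q1; rewrite -ln_1; apply: ln_increasing; first exact: Rlt_0_1.
by apply: (lt_INR 1); apply/ssrnat.ltP.
Qed.

Lemma logR_mull (q w : nat) : (1 < q)%N -> (0 < w)%N ->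
  logR q (q * w) = logR q w + 1.
Proof.
move=> q1 w0; have /RltP lnq := ln_nat_gt0 q1.
rewrite /logR -multE mult_INR ln_mult; last 2 first.
- by apply: (lt_INR 0); apply/ssrnat.ltP; lia.
- by apply: (lt_INR 0); apply/ssrnat.ltP.
rewrite !RdivE RplusE; field; exact: lt0r_neq0.
Qed.

Lemma INR_expn (q K : nat) : INR (q ^ K) = pow (INR q) K.
Proof. by elim: K => [|K IHK] //; rewrite expnS -multE mult_INR IHK. Qed.

Lemma logR_lt_expn (q w K : nat) : (1 < q)%N -> (0 < w)%N ->
  logR q w < K%:R -> (w < q ^ K)%N.
Proof.
move=> q1 w0 /RltP; rewrite -INRE /logR => lt_log.
have lnq := ln_nat_gt0 q1.
have w_pos : Rlt 0 (INR w) by apply: (lt_INR 0); apply/ssrnat.ltP.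
have qK_pos : Rlt 0 (INR (q ^ K)) by apply: (lt_INR 0); apply/ssrnat.ltP; rewrite expn_gt0; lia.
apply/ssrnat.ltP/INR_lt/(ln_lt_inv _ _ w_pos qK_pos).
rewrite INR_expn ln_pow; last by apply: (lt_INR 0); apply/ssrnat.ltP; lia.
move/(Rmult_lt_compat_r _ _ _ lnq): lt_log.
by rewrite /Rdiv Rmult_assoc Rinv_l ?Rmult_1_r //; apply: Rgt_not_eq.
Qed.

Theorem theorem3p1 (F : finFieldType) (n k h w m : nat)
  (G : 'M[F]_(k, n)) (S : 'M[F]_(k + h, m)) :
  projective G -> \rank G = k -> is_maxwt G w -> (0 < h)%N ->
  rep_system (row_mx (col_mx G (0 : 'M[F]_(h, n))) S) ->
  [/\ m = ((#|F| ^ (k + h) - 1) %/ (#|F| - 1) - n)%N,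
      \rank S = (k + h)%N,
      is_minwt S (#|F| ^ (k + h - 1) - w)%N,
      is_maxwt S (#|F| ^ (k + h - 1))%N &
      (logR #|F| w - k%:R + 2 < h%:R :> R ->
         minimal_code S /\ ashikhmin_barg S)].
Proof.
(* Projectivity of G is part of [rep_system]. *)
move=> _ _ maxG h_gt0 repGS.
have minS := complement_minwt repGS h_gt0 maxG.
have maxS := complement_maxwt repGS h_gt0.
split=> [||//|//|log_lt].
    exact: complement_length repGS.
  exact: rank_complement repGS h_gt0.
have q_gt1 := card_finNzRing_gt1 F; have w_gt0 := is_maxwt_gt0 maxG.
have qw_lt : (#|F| * w < #|F| ^ (k + h - 1))%N.
  apply: logR_lt_expn => //; first by rewrite muln_gt0 w_gt0 (ltnW q_gt1).
  by rewrite logR_mull // natrB ?natrD; [lra | lia].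
have ratio : (#|F|.-1 * #|F| ^ (k + h - 1) < #|F| * (#|F| ^ (k + h - 1) - w))%N.
  by move: qw_lt q_gt1; set P := (#|F| ^ _)%N; set q := #|F|; nia.
split; [exact: minimal_code_of_weights minS maxS ratio |].
exact: ashikhmin_barg_of_weights minS maxS ratio.
Qed.
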